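(* Let $r\geq 2$ and $n>r^{8}$. Every graph $G$ of order $n$ with $e(G)>t_r(n)$ has an induced subgraph $G'$ of order $n'>(1-1/r^{2})n$ such that either $$K_{r+1}\subseteq G'\quad\text{and}\quad\delta(G')>\left(\frac{r-1}{r}-\frac{1}{r^{2}(r^{2}-1)}\right)n',$$ or $$e(G')>\left(\frac{r-1}{2r}+\frac{1}{r^{4}(r^{2}-1)}\right)(n')^{2}.$$
   Context: All graphs are finite and simple; $e(G)$ is the number of edges and $\delta(G)$ the minimum degree. $T_r(n)$ denotes the Turán graph: the complete $r$-partite graph on $n$ vertices whose $r$ parts have sizes as equal as possible (differing by at most one); $t_r(n)=e(T_r(n))$. $K_{r+1}$ is the complete graph on $r+1$ vertices. *)

(* A simple graph on a finite vertex type T is a symmetric,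
   irreflexive boolean relation e : rel T. *)
From mathcomp Require Import all_boot all_order all_algebra.
Set Implicit Arguments. Unset Strict Implicit. Unset Printing Implicit Defensive.

Definition induced_edges (T : finType) (e : rel T) (S : {set T}) : {set {set T}} :=
  [set A : {set T} | (A \subset S) &&
     [exists x : T, exists y : T, (A == [set x; y]) && e x y]].

Definition ne_induced (T : finType) (e : rel T) (S : {set T}) : nat :=
  #|induced_edges e S|.

Definition nedges (T : finType) (e : rel T) : nat := ne_induced e [set: T].

Definition deg_in (T : finType) (e : rel T) (S : {set T}) (v : T) : nat :=
  #|[set u in S | e v u]|.

(* delta(G[S]) (equals #|S| = 0 when S is empty) *)
Definition mindeg_in (T : finType) (e : rel T) (S : {set T}) : nat :=
  \big[minn/#|S|]_(v in S) deg_in e S v.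

Definition has_clique_in (T : finType) (e : rel T) (S : {set T}) (k : nat) : Prop :=
  exists K : {set T}, [/\ K \subset S, #|K| = k &
    forall x y, x \in K -> y \in K -> x != y -> e x y].

(* Turan graph T_r(n) on 'I_n: vertex i lies in part (i mod r); parts have
   sizes differing by at most one; edges join vertices in different parts. *)
Definition turan_rel (r n : nat) : rel (ordinal n) :=
  fun i j : ordinal n => (nat_of_ord i %% r != nat_of_ord j %% r)%N.

Definition turan_number (r n : nat) : nat := nedges (@turan_rel r n).

From mathcomp Require Import all_boot all_order all_algebra.
From mathcomp Require Import zify ring lra.
Import Order.TTheory GRing.Theory Num.Theory.
Set Implicit Arguments. Unset Strict Implicit. Unset Printing Implicit Defensive.

(* Repeatedly delete a vertex of minimum degree from the current induced
   subgraph S as long as delta(S) <= c |S|, with c = (r-1)/r - eps and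
   eps = 1/(r^2 (r^2-1)), for at most K = floor((n-1)/r^2) steps, so that at
   least n - K > (1 - 1/r^2) n vertices remain.  Since
   t_r(s) - t_r(s-1) >= (r-1)/r (s-1), every deletion raises the excess
   e(S) - t_r(|S|) by at least eps (n-K) - 1 >= 0.  If the process stops
   early, S has minimum degree > c |S| and more than t_r(|S|) edges, hence a
   K_{r+1} by Turan's theorem; otherwise the accumulated excess
   K (eps (n-K) - 1) already exceeds the second edge threshold. *)

Section InducedSubgraphs.
Variables (T : finType) (e : rel T).

Lemma deg_in_le_card (S : {set T}) v : deg_in e S v <= #|S|.
Proof. by apply: subset_leq_card; apply/subsetP => u; rewrite inE => /andP[]. Qed.

Lemma mindeg_in_witness (S : {set T}) :
  S != set0 -> exists2 v, v \in S & deg_in e S v <= mindeg_in e S.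
Proof.
case/set0Pn=> v0 v0S; case: (arg_minnP (deg_in e S) v0S) => v vS vmin.
exists v => //; apply: (big_ind (fun k => deg_in e S v <= k)) => //.
- exact: deg_in_le_card.
- by move=> a b; rewrite leq_min => -> ->.
Qed.

Lemma ne_induced_set0 : ne_induced e set0 = 0.
Proof.
apply/eqP; rewrite cards_eq0; apply/eqP/setP => A; rewrite !inE.
apply/negbTE/andP => -[sub /existsP [x /existsP [y /andP [/eqP HA _]]]].
by move/subsetP: sub => /(_ x); rewrite HA !inE eqxx => /(_ isT).
Qed.

Hypotheses (esym : symmetric e) (eirr : irreflexive e).

Lemma ne_induced_delete (S : {set T}) v : v \in S ->
  ne_induced e S = ne_induced e (S :\ v) + deg_in e S v.
Proof.
move=> vS; rewrite /ne_induced /deg_in.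
(* Edges containing v are the pairs [set v; u] with u a neighbour of v. *)
rewrite -(cardsID [set A : {set T} | v \in A]) addnC; congr (_ + _).
  apply: eq_card => A; rewrite !inE.
  apply/andP/andP => -[H1 H2].
    move: H2 => /andP [sub ex]; split => //.
    by apply/subsetP => x xA; rewrite !inE (subsetP sub x xA) andbT;
      apply/eqP => xv; move: H1; rewrite -xv xA.
  split.
    by apply/negP => vA; move/subsetP: H1 => /(_ v vA); rewrite !inE eqxx.
  rewrite H2 andbT.
  by apply/subsetP => x xA; move/subsetP: H1 => /(_ x xA); rewrite !inE => /andP [].
rewrite -[RHS](card_in_imset (f := fun u => [set v; u])); last first.
  move=> u u'; rewrite !inE => /andP [_ evu] /andP [_ evu'] /setP /(_ u) H.
  have: u \in [set v; u'] by rewrite -H !inE eqxx orbT.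
  rewrite !inE => /orP [/eqP uv|/eqP //].
  by move: evu; rewrite uv eirr.
apply: eq_card => A; rewrite !inE; apply/idP/imsetP.
  move=> /andP [/andP [sub /existsP [x /existsP [y /andP [/eqP HA exy]]]] vA].
  move: vA; rewrite HA !inE => /orP [/eqP vx | /eqP vy].
    exists y; last by rewrite vx.
    by rewrite inE (subsetP sub y) ?HA ?inE ?eqxx ?orbT // vx.
  exists x; last by rewrite vy setUC.
  by rewrite inE (subsetP sub x) ?HA ?inE ?eqxx // vy esym.
move=> [u]; rewrite inE => /andP [uS evu] ->.
rewrite !inE eqxx andbT; apply/andP; split.
  by apply/subsetP => x; rewrite !inE => /orP [/eqP ->|/eqP ->].
by apply/existsP; exists v; apply/existsP; exists u; rewrite eqxx evu.
Qed.

Lemma greedy_clique (S : {set T}) d r :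
  (forall v, v \in S -> d <= deg_in e S v) -> d <= #|S| ->
  r * (#|S| - d) < #|S| -> forall i, i <= r.+1 ->
  exists K : {set T}, [/\ K \subset S, #|K| = i,
    (forall x y, x \in K -> y \in K -> x != y -> e x y) &
    #|S| <= #|[set u in S | [forall x in K, e x u]]| + i * (#|S| - d)].
Proof.
move=> Hdeg dS Hr; elim=> [|i IH] Hi.
  exists set0; rewrite sub0set cards0 mul0n addn0; split => // [x y|]; first by rewrite inE.
  by apply: subset_leq_card; apply/subsetP => u uS; rewrite inE uS; apply/forallP => x; rewrite inE.
have [K [KS cK Kcl Hc]] := IH (ltnW Hi).
set C := [set u in S | [forall x in K, e x u]] in Hc.
have /set0Pn [u uC] : C != set0.
  rewrite -card_gt0; have : i * (#|S| - d) <= r * (#|S| - d) by apply: leq_mul.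
  lia.
move: (uC); rewrite inE => /andP [uS /forallP uK].
have unK : u \notin K by apply/negP => uK'; move: (uK u); rewrite uK' eirr.
exists (u |: K); split.
- by rewrite subUset sub1set uS KS.
- by rewrite cardsU1 unK cK.
- move=> x y; rewrite !inE => /orP [/eqP ->|xK] /orP [/eqP ->|yK].
  + by rewrite eqxx.
  + by move=> _; rewrite esym; move: (uK y); rewrite yK.
  + by move=> _; move: (uK x); rewrite xK.
  + exact: Kcl.
- set N := [set w in S | e u w].
  have HN : d <= #|N| by exact: Hdeg.
  have HCN : #|C :|: N| <= #|S|.
    by apply: subset_leq_card; rewrite subUset; apply/andP; split;
      apply/subsetP => w; rewrite inE => /andP [].
  have := cardsUI C N.
  have : C :&: N \subset [set w in S | [forall x in u |: K, e x w]].
    apply/subsetP => w; rewrite !inE => /andP [/andP [wS /forallP wK] /andP [_ euw]].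
    rewrite wS; apply/forallP => x; rewrite !inE.
    by apply/implyP => /orP [/eqP ->|xK] //; move: (wK x); rewrite xK.
  move/subset_leq_card; rewrite mulSn; lia.
Qed.

End InducedSubgraphs.

(* Adding the vertices of T_r(m) one at a time, vertex j joins part j mod r,
   which already holds j %/ r of them; so turan_sum r m = t_r(m). *)
Definition turan_sum (r m : nat) : nat := \sum_(j < m) (j - j %/ r).

Lemma turan_sumS r m : turan_sum r m.+1 = turan_sum r m + (m - m %/ r).
Proof. by rewrite /turan_sum big_ord_recr. Qed.

Lemma turan_clique (T : finType) (e : rel T) r (S : {set T}) :
  symmetric e -> irreflexive e -> 0 < r ->
  turan_sum r #|S| < ne_induced e S -> has_clique_in e S r.+1.
Proof.
move=> esym eirr r0; move Hm: #|S| => m; elim: m S Hm => [|m IH] S cS.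
  by move/eqP: cS; rewrite cards_eq0 => /eqP ->; rewrite ne_induced_set0.
rewrite turan_sumS => Hlt.
have [/existsP [v /andP [vS Hv]] | /existsPn Hall] :=
  boolP [exists v in S, deg_in e S v <= m - m %/ r].
  have cS' : #|S :\ v| = m by move: cS; rewrite (cardsD1 v S) vS add1n => -[].
  rewrite (ne_induced_delete esym eirr vS) in Hlt.
  have [|K [KS cK Kcl]] := IH (S :\ v) cS'; first lia.
  by exists K; split => //; apply: subset_trans KS (subsetDl _ _).
have Hd v : v \in S -> (m - m %/ r).+1 <= deg_in e S v.
  by move=> vS; move: (Hall v); rewrite vS ltnNge.
have dS : (m - m %/ r).+1 <= #|S| by rewrite cS ltnS leq_subr.
have Hr : r * (#|S| - (m - m %/ r).+1) < #|S|.
  by rewrite cS subSS subKn ?leq_div // mulnC ltnS leq_divM.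
have [K [KS cK Kcl _]] := greedy_clique esym eirr Hd dS Hr (leqnn r.+1).
by exists K.
Qed.

Lemma card_ord_prefix n k : k <= n -> #|[set u : 'I_n | u < k]| = k.
Proof.
move=> kn; have inj : injective (widen_ord kn) by move=> i j /(congr1 val) ij; apply: val_inj.
rewrite -[RHS]card_ord -(card_imset _ inj).
apply: eq_card => u; rewrite !inE; apply/idP/imsetP => [uk|[i _ ->] /=]; last exact: ltn_ord.
by exists (Ordinal uk) => //; apply: val_inj.
Qed.

Lemma card_ord_prefix_mod n r k :
  #|[set u : 'I_n | (u < k) && (u %% r == k %% r)]| <= k %/ r.
Proof.
rewrite cardE -(size_map (fun u : 'I_n => u %/ r)) -(size_iota 0 (k %/ r)).
apply: uniq_leq_size.
  rewrite map_inj_in_uniq ?enum_uniq // => u u'.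
  rewrite !mem_enum !inE => /andP [_ /eqP h1] /andP [_ /eqP h2] hq.
  by apply: val_inj; rewrite /= (divn_eq u r) (divn_eq u' r) hq h1 h2.
move=> x /mapP [u]; rewrite mem_enum inE => /andP [uk /eqP h] ->.
rewrite mem_iota add0n /= ltnNge; apply/negP => Hle.
have := leq_mul Hle (leqnn r); have := divn_eq u r; have := divn_eq k r.
rewrite h; move: (u %/ r) (k %/ r) (k %% r) uk => a b c; lia.
Qed.

Lemma turan_sum_le_turan_number r n : turan_sum r n <= turan_number r n.
Proof.
have esym : symmetric (@turan_rel r n) by move=> i j; rewrite /turan_rel eq_sym.
have eirr : irreflexive (@turan_rel r n) by move=> i; rewrite /turan_rel eqxx.
suff H k : k <= n -> turan_sum r k <= ne_induced (@turan_rel r n) [set u : 'I_n | u < k].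
  have := H n (leqnn n); congr (_ <= ne_induced _ _).
  by apply/setP => u; rewrite !inE ltn_ord.
elim: k => [|k IH] kn; first by rewrite /turan_sum big_ord0.
set v := Ordinal kn.
have vS : v \in [set u : 'I_n | u < k.+1] by rewrite inE.
rewrite (ne_induced_delete esym eirr vS) turan_sumS.
have -> : [set u : 'I_n | u < k.+1] :\ v = [set u : 'I_n | u < k].
  by apply/setP => u; rewrite !inE ltnS leq_eqVlt -val_eqE /=; case: ltngtP.
apply: leq_add; first exact: IH (ltnW kn).
set A := [set u : 'I_n | u < k].
set B := [set u : 'I_n | (u < k) && (u %% r == k %% r)].
have HA : #|A| = k by apply: card_ord_prefix; exact: ltnW.
have HB : #|B| <= k %/ r := card_ord_prefix_mod n r k.
have HAB : #|A :\: B| <= deg_in (@turan_rel r n) [set u : 'I_n | u < k.+1] v.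
  apply: subset_leq_card; apply/subsetP => u; rewrite !inE /turan_rel /=.
  by move=> /andP [h1 h2]; rewrite ltnW //= eq_sym; move: h1; rewrite h2.
have := cardsID B A; have : #|A :&: B| <= #|B| by apply: subset_leq_card; exact: subsetIr.
lia.
Qed.

Local Open Scope ring_scope.

Section Peeling.
Variables (T : finType) (e : rel T).
Hypotheses (esym : symmetric e) (eirr : irreflexive e).

Lemma peel_low_degree (phi : nat -> rat) (c g : rat) (S : {set T}) (k : nat) :
  0 <= g -> (k <= #|S|)%N ->
  (forall s, (#|S| - k < s)%N -> phi s.-1 + g <= phi s - c * s%:R) ->
  phi #|S| < (ne_induced e S)%:R ->
  (exists S' : {set T}, [/\ (#|S| - k < #|S'|)%N,
     c * #|S'|%:R < (mindeg_in e S')%:R & phi #|S'| < (ne_induced e S')%:R])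
  \/ (exists S' : {set T}, #|S'| = (#|S| - k)%N /\
        phi #|S'| + k%:R * g < (ne_induced e S')%:R).
Proof.
move=> g0; elim: k => [|k IH] kS Hphi He.
  by right; exists S; rewrite subn0 mul0r addr0.
have Hphi' s : (#|S| - k < s)%N -> phi s.-1 + g <= phi s - c * s%:R.
  by move=> ks; apply: Hphi; lia.
have [[S' [cS' Hdeg HS']]|[S' [cS' HS']]] := IH (ltnW kS) Hphi' He.
  by left; exists S'; split => //; lia.
have [Hdeg | Hlow] := ltrP (c * #|S'|%:R) (mindeg_in e S')%:R.
  left; exists S'; split => //; first by rewrite cS'; lia.
  have : 0 <= k%:R * g by rewrite mulr_ge0.
  lra.
have /(mindeg_in_witness e) [v vS' Hv] : S' != set0 by rewrite -card_gt0 cS'; lia.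
have cSv : #|S' :\ v| = (#|S| - k.+1)%N.
  by move: cS'; rewrite (cardsD1 v S') vS' add1n subnS => <-.
right; exists (S' :\ v); split => //.
have /Hphi : (#|S| - k.+1 < #|S'|)%N by rewrite cS'; lia.
rewrite (ne_induced_delete esym eirr vS') natrD in HS'.
have -> : #|S'|.-1 = #|S' :\ v| by rewrite cSv cS' subnS.
have : (deg_in e S' v)%:R <= c * #|S'|%:R by apply: le_trans Hlow; rewrite ler_nat.
lra.
Qed.
End Peeling.

Lemma peel_count_lower (q K n : rat) : 0 < q ->
  n <= K * q + q -> q ^+ 4 < n -> q ^+ 3 - 1 <= K.
Proof.
move=> q0 Khi nbig; have : q * (q ^+ 3 - 1) <= q * K by lra.
by rewrite ler_pM2l.
Qed.

Lemma peel_threshold (q K n : rat) : 4 <= q ->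
  K * q < n -> n <= K * q + q -> q ^+ 4 < n -> q * (q - 1) <= n - K.
Proof.
move=> q4 Klo Khi nbig; have q0 : 0 < q by lra.
by have := peel_count_lower q0 Khi nbig; nra.
Qed.

Lemma peel_core (q K n : rat) : 4 <= q ->
  K * q < n -> n <= K * q + q -> q ^+ 4 < n ->
  (n - K) ^+ 2 + q ^+ 2 * (q - 1) * (n - K) / 2 <= K * q * (n - K - q * (q - 1)).
Proof.
move=> q4 Klo Khi nbig; have q0 : 0 < q by lra.
have Kbig : q ^+ 2 * (q - 1) / 2 + q ^+ 2 + q <= K.
  by have := peel_count_lower q0 Khi nbig; nra.
have Kc0 : 0 <= K - q - q ^+ 2 * (q - 1) / 2 by nra.
have : K * (q - 1) * (K - q - q ^+ 2 * (q - 1) / 2)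
       <= (n - K) * (K - q - q ^+ 2 * (q - 1) / 2).
  by apply: ler_wpM2r => //; lra.
have : 0 <= K * (q - 1) * (K - q - q ^+ 2 * (q - 1) / 2 - q ^+ 2).
  by apply: mulr_ge0; [apply: mulr_ge0; nra | lra].
have : (n - K) * (K - q) <= (n - K) * (K * q - (n - K)).
  by apply: ler_wpM2l; [have := peel_threshold q4 Klo Khi nbig; nra | lra].
lra.
Qed.

Section TuranSumBounds.
Variables (r : nat).
Hypothesis r0 : (0 < r)%N.
Local Notation R := (r%:R : rat).
Local Notation eps := (1 / (R ^+ 2 * (R ^+ 2 - 1))).

Lemma natr_subn_divn_ge (M : nat) : (R - 1) / R * M%:R <= (M - M %/ r)%N%:R.
Proof.
rewrite natrB ?leq_div //.
have rp : 0 < R by rewrite ltr0n.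
have : (M %/ r)%:R <= M%:R / R by rewrite ler_pdivlMr // -natrM ler_nat leq_divM.
have -> : (R - 1) / R * M%:R = M%:R - M%:R / R by field; rewrite gt_eqF.
lra.
Qed.

Lemma turan_sum_ge (m : nat) : (R - 1) / (2 * R) * m%:R * (m%:R - 1) <= (turan_sum r m)%:R.
Proof.
elim: m => [|m IH]; first by rewrite mulr0 mul0r.
rewrite turan_sumS natrD.
have -> : (R - 1) / (2 * R) * m.+1%:R * (m.+1%:R - 1) =
  (R - 1) / (2 * R) * m%:R * (m%:R - 1) + (R - 1) / R * m%:R.
  by rewrite -natr1; field; rewrite pnatr_eq0 -lt0n.
by have := natr_subn_divn_ge m; lra.
Qed.

Lemma turan_sum_peel_step (m s : nat) : (m < s)%N ->
  (turan_sum r s.-1)%:R + (eps * m%:R - 1) <= (turan_sum r s)%:R - ((R - 1) / R - eps) * s%:R.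
Proof.
case: s => // s ms /=; rewrite turan_sumS natrD.
have eps0 : 0 <= eps by rewrite divr_ge0 // mulr_ge0 ?sqr_ge0 // subr_ge0 exprn_ege1 // ler1n.
have rp : 0 < R by rewrite ltr0n.
have : (R - 1) / R <= 1 by rewrite ler_pdivrMr // mul1r; lra.
have : eps * m%:R <= eps * s%:R by rewrite ler_wpM2l // ler_nat.
have := natr_subn_divn_ge s; rewrite -natr1; lra.
Qed.

End TuranSumBounds.

Lemma dense_bound (R K n : rat) : 2 <= R ->
  K * R ^+ 2 < n -> n <= K * R ^+ 2 + R ^+ 2 -> (R ^+ 2) ^+ 4 < n ->
  ((R - 1) / (2 * R) + 1 / (R ^+ 4 * (R ^+ 2 - 1))) * (n - K) ^+ 2 <=
  (R - 1) / (2 * R) * (n - K) * (n - K - 1) + K * (1 / (R ^+ 2 * (R ^+ 2 - 1)) * (n - K) - 1).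
Proof.
move=> R2 Klo Khi nbig.
have q4 : 4 <= R ^+ 2 by nra.
have core := peel_core q4 Klo Khi nbig.
have m0 : 0 <= n - K by have := peel_threshold q4 Klo Khi nbig; nra.
have q1 : 0 < R ^+ 2 - 1 by lra.
have Rp : 0 < R by lra.
have R0 : R != 0 by rewrite gt_eqF.
have a12 : (R - 1) / (2 * R) <= 1 / 2 by rewrite ler_pdivrMr; nra.
rewrite -subr_le0.
have -> : ((R - 1) / (2 * R) + 1 / (R ^+ 4 * (R ^+ 2 - 1))) * (n - K) ^+ 2 -
  ((R - 1) / (2 * R) * (n - K) * (n - K - 1) + K * (1 / (R ^+ 2 * (R ^+ 2 - 1)) * (n - K) - 1))
  = ((n - K) ^+ 2 + (R - 1) / (2 * R) * (R ^+ 2) ^+ 2 * (R ^+ 2 - 1) * (n - K)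
     - K * R ^+ 2 * (n - K - R ^+ 2 * (R ^+ 2 - 1))) / (R ^+ 4 * (R ^+ 2 - 1)).
  by field; rewrite gt_eqF // R0.
rewrite pmulr_lle0 ?invr_gt0 ?mulr_gt0 ?exprn_gt0 //.
have : (R - 1) / (2 * R) * ((R ^+ 2) ^+ 2 * (R ^+ 2 - 1) * (n - K))
       <= 1 / 2 * ((R ^+ 2) ^+ 2 * (R ^+ 2 - 1) * (n - K)).
  by apply: ler_wpM2r => //; rewrite !mulr_ge0 ?sqr_ge0 //; lra.
rewrite !mulrA in core *; lra.
Qed.

Lemma peeled_size_large (R K n s : rat) : 0 < R ->
  K * R ^+ 2 < n -> n - K <= s -> (1 - 1 / R ^+ 2) * n < s.
Proof.
move=> Rp Klo sbig; have : K < n / R ^+ 2 by rewrite ltr_pdivlMr ?exprn_gt0.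
rewrite mulrBl mul1r mul1r; lra.
Qed.

Lemma floor_div_bracket (d n : nat) : (0 < d)%N -> (0 < n)%N ->
  exists2 K, (K * d < n)%N & (n <= K * d + d)%N.
Proof.
move=> d0 n0; exists (n.-1 %/ d)%N; first by have := leq_divM n.-1 d; lia.
by have := ltn_ceil n.-1 d0; lia.
Qed.

Section PeelingParameters.
Variables (r K n : nat).
Hypotheses (r2 : (2 <= r)%N) (Klo : (K * r ^ 2 < n)%N)
  (Khi : (n <= K * r ^ 2 + r ^ 2)%N) (nbig : (r ^ 8 < n)%N).
Local Notation R := (r%:R : rat).
Local Notation eps := (1 / (R ^+ 2 * (R ^+ 2 - 1))).

Let R2 : 2 <= R. Proof. by rewrite ler_nat. Qed.
Let Klo_rat : K%:R * R ^+ 2 < n%:R. Proof. by rewrite -natrX -natrM ltr_nat. Qed.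
Let Khi_rat : n%:R <= K%:R * R ^+ 2 + R ^+ 2.
Proof. by rewrite -natrX -natrM -natrD ler_nat. Qed.
Let nbig_rat : (R ^+ 2) ^+ 4 < n%:R. Proof. by rewrite -!natrX ltr_nat -expnM. Qed.

Lemma peel_count_le : (K <= n)%N.
Proof. by apply: leq_trans (ltnW Klo); rewrite leq_pmulr // expn_gt0 (ltnW r2). Qed.

Let natrBnK : (n - K)%N%:R = n%:R - K%:R :> rat.
Proof. by rewrite natrB // peel_count_le. Qed.

Lemma peel_gain_ge0 : 0 <= eps * (n - K)%N%:R - 1.
Proof.
have q4 : 4 <= R ^+ 2 by have := R2; nra.
rewrite mul1r subr_ge0 ler_pdivlMl ?mulr1 ?natrBnK.
  exact: peel_threshold q4 Klo_rat Khi_rat nbig_rat.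
by apply: mulr_gt0; lra.
Qed.

Lemma peeled_edges_dense :
  ((R - 1) / (2 * R) + 1 / (R ^+ 4 * (R ^+ 2 - 1))) * (n - K)%N%:R ^+ 2
  <= (turan_sum r (n - K))%:R + K%:R * (eps * (n - K)%N%:R - 1).
Proof.
have := dense_bound R2 Klo_rat Khi_rat nbig_rat.
have := turan_sum_ge (ltnW r2) (n - K); rewrite natrBnK; lra.
Qed.

Lemma peeled_size_gt (s : nat) : (n - K <= s)%N -> (1 - 1 / R ^+ 2) * n%:R < s%:R.
Proof.
move=> sbig; apply: peeled_size_large Klo_rat _; first by have := R2; lra.
by rewrite -natrBnK ler_nat.
Qed.

End PeelingParameters.

Theorem theorem6 (r : nat) (T : finType) (e : rel T) :
  (2 <= r)%N -> (r ^ 8 < #|T|)%N ->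
  symmetric e -> irreflexive e ->
  (turan_number r #|T| < nedges e)%N ->
  exists S : {set T},
    ((1 - 1 / (r%:R ^+ 2)) * #|T|%:R < #|S|%:R :> rat)%R /\
    ((has_clique_in e S r.+1 /\
      (((r%:R - 1) / r%:R - 1 / (r%:R ^+ 2 * (r%:R ^+ 2 - 1))) * #|S|%:R
         < (mindeg_in e S)%:R :> rat)%R)
     \/
     ((((r%:R - 1) / (2 * r%:R) + 1 / (r%:R ^+ 4 * (r%:R ^+ 2 - 1)))
         * (#|S|%:R ^+ 2) < (ne_induced e S)%:R :> rat)%R)).
Proof.
move=> r2 nbig esym eirr hT; have r0 : (0 < r)%N by lia.
have r2p : (0 < r ^ 2)%N by rewrite expn_gt0 r0.
have [K Klo Khi] := floor_div_bracket r2p (leq_ltn_trans (leq0n _) nbig).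
have := peel_low_degree esym eirr (phi := fun s => (turan_sum r s)%:R) (S := [set: T])
  (k := K) (c := (r%:R - 1) / r%:R - 1 / (r%:R ^+ 2 * (r%:R ^+ 2 - 1)))
  (peel_gain_ge0 r2 Klo Khi nbig).
rewrite cardsT => /(_ (peel_count_le r2 Klo) (fun s ks => turan_sum_peel_step r0 ks)).
have dense : (turan_sum r #|T| < ne_induced e [set: T])%N.
  exact: leq_ltn_trans (turan_sum_le_turan_number r #|T|) hT.
rewrite ltr_nat => /(_ dense) [[S [cS Hdeg HS]] | [S [cS HS]]]; exists S;
  (split; first apply: (peeled_size_gt r2 Klo)).
- exact: ltnW.
- by left; split => //; apply: turan_clique esym eirr r0 _; rewrite -(ltr_nat rat).
- by rewrite cS.
- by right; rewrite cS in HS *; apply: le_lt_trans HS; apply: peeled_edges_dense.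
Qed.
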